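(* Let $e_1,\dots,e_m$ ($m\ge2$) be training domains, $\mathcal{F}$ a class of predictors, and for $f\in\mathcal{F}$ let $\mathcal{R}^{e_1}(f),\dots,\mathcal{R}^{e_m}(f)\in\mathbb{R}$ be its risks, with sample mean $\hat\mu_f=\frac1m\sum_{i=1}^m\mathcal{R}^{e_i}(f)$ and sample standard deviation $\hat\sigma_f=\big(\frac{1}{m-1}\sum_{i=1}^m(\mathcal{R}^{e_i}(f)-\hat\mu_f)^2\big)^{1/2}$. For $\alpha\in(0,1)$ let $\hat f_\alpha\in\arg\min_{f\in\mathcal{F}}\,\hat\mu_f+\Phi^{-1}(\alpha)\hat\sigma_f$ (assumed to exist), where $\Phi^{-1}$ is the standard normal quantile function. Assume 1. $\mathcal{F}$ contains an invariant-risk predictor $f_0$ with finite mean risk, i.e. $\hat\sigma_{f_0}=0$ and $\hat\mu_{f_0}<\infty$; and 2. $\mu_*:=\inf_{f\in\mathcal{F}}\hat\mu_f>-\infty$. Then $\lim_{\alpha\to1}\hat\sigma_{\hat f_\alpha}=0$ and $\limsup_{\alpha\to1}\hat\mu_{\hat f_\alpha}\le\hat\mu_{f_0}$.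
   Context: $\hat f_\alpha$ is the predictor minimizing the $\alpha$-quantile of the Gaussian distribution $\mathcal{N}(\hat\mu_f,\hat\sigma_f^2)$ fitted to the training-domain risks of $f$. *)

From HB Require Import structures.
From mathcomp Require Import all_boot all_order all_algebra.
From mathcomp Require Import all_classical all_reals all_analysis.
From mathcomp Require Import normal_distribution.
Set Implicit Arguments. Unset Strict Implicit. Unset Printing Implicit Defensive.
Import Order.TTheory GRing.Theory Num.Theory numFieldNormedType.Exports.
Local Open Scope classical_set_scope.
Local Open Scope ring_scope.

Section Defs.
Variable R : realType.

Definition std_normal_cdf (x : R) : R :=
  fine (normal_prob (0 : R) 1 `]-oo, x]).

(* standard normal quantile function Phi^{-1}(a) = inf {x | a <= Phi x}
   (generalized inverse; coincides with the inverse on (0,1)) *)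
Definition std_normal_quantile (a : R) : R :=
  inf [set x : R | a <= std_normal_cdf x].

Variable m : nat.

Definition sample_mean (r : 'I_m -> R) : R := (\sum_(i < m) r i) / m%:R.

Definition sample_sd (r : 'I_m -> R) : R :=
  Num.sqrt ((\sum_(i < m) (r i - sample_mean r) ^+ 2) / (m.-1)%:R).

End Defs.

(* As a -> 1, the quantile Phi^{-1}(a) tends to +oo, because Phi < 1 everywhere
   (the normal density is positive) while Phi -> 1 at +oo.  Comparing fhat_a with
   the invariant predictor f0 gives mu(fhat_a) + Phi^{-1}(a) sigma(fhat_a) <= mu(f0);
   as mu >= mu_*, this bounds Phi^{-1}(a) sigma(fhat_a) by mu(f0) - mu_*, so
   sigma(fhat_a) -> 0, and once Phi^{-1}(a) >= 0 it gives mu(fhat_a) <= mu(f0). *)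

From HB Require Import structures.
From mathcomp Require Import all_boot all_order all_algebra.
From mathcomp Require Import all_classical all_reals all_analysis.
From mathcomp Require Import normal_distribution measurable_realfun lra.
Import Order.TTheory GRing.Theory Num.Theory numFieldNormedType.Exports.
Local Open Scope classical_set_scope.
Local Open Scope ring_scope.

Section quantile.
Variable R : realType.

Lemma quantile_cvgy (G : R -> R) (c : R) :
  {homo G : x y / x <= y} -> (forall x, G x < c) -> G x @[x --> +oo] --> c ->
  inf [set x | a <= G x] @[a --> c^'-] --> +oo.
Proof.
move=> G_nd G_lt G_cvg; apply/cvgryPge => M; near=> a.
apply: lb_le_inf.
  have a_lt_c : a < c by near: a; exact: nbhs_left_lt.
  by have [x /ltW aGx] := filter_ex (cvgr_gt c G_cvg _ a_lt_c); exists x.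
move=> x /= aGx; rewrite leNgt; apply/negP => /ltW /G_nd GxM.
suff : G M < a by rewrite ltNge (le_trans aGx GxM).
by near: a; exact/nbhs_left_gt/G_lt.
Unshelve. all: by end_near.
Qed.

End quantile.

Section std_normal.
Variable R : realType.
Local Notation P := (normal_prob (0 : R) 1).

Let id_R : measurableTypeR R -> R := idfun.
HB.instance Definition _ :=
  @isMeasurableFun.Build _ _ _ _ id_R (@measurable_id _ _ setT).

(* [std_normal_cdf] is the cdf of the identity random variable on (R, N(0, 1)),
   so the general theory of cdfs applies to it. *)
Let std_normal_cdfE x : std_normal_cdf x = fine (cdf (id_R : {RV P >-> R}) x).
Proof. by []. Qed.

Lemma std_normal_cdf_nondecreasing : {homo @std_normal_cdf R : x y / x <= y}.
Proof.
move=> x y xy; rewrite !std_normal_cdfE fine_le ?fin_num_measure//.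
exact: cdf_nondecreasing.
Qed.

Lemma cvg_std_normal_cdfy1 : std_normal_cdf x @[x --> +oo] --> (1 : R).
Proof. exact: (fine_cvg (cvg_cdfy1 (id_R : {RV P >-> R}))). Qed.

Lemma std_normal_pdf_lb (x y : R) : x < y <= x + 1 ->
  normal_peak 1 * expR (- (`|x| + 1) ^+ 2) <= normal_pdf 0 1 y.
Proof.
move=> /andP[xy yx1]; rewrite normal_pdfE ?oner_neq0// ler_wpM2l ?normal_peak_ge0//.
rewrite /normal_fun ler_expR subr0 expr1n.
have := ler_norm x; have := ler_norm (- x); rewrite normrN.
have : 0 <= `|x| by []; set a := `|x|; nra.
Qed.

Lemma std_normal_prob_itv_gt0 (x : R) : (0 < P `]x, (x + 1)%R])%E.
Proof.
pose c := normal_peak 1 * expR (- (`|x| + 1) ^+ 2).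
have c_gt0 : 0 < c by rewrite mulr_gt0 ?normal_peak_gt0 ?oner_neq0 ?expR_gt0.
apply: (@lt_le_trans _ _ c%:E); first by rewrite lte_fin.
have -> : c%:E = (\int[lebesgue_measure]_(y in `]x, (x + 1)%R]) c%:E)%E.
  rewrite integral_cst//= -[LHS]mule1; congr (_ * _)%E.
  by rewrite lebesgue_measure_itv/= lte_fin ltrDl ltr01 -EFinD addrAC subrr add0r.
apply: ge0_le_integral => //.
- by move=> y _; rewrite lee_fin ltW.
- by apply/measurable_EFinP/measurable_funTS; exact: measurable_normal_pdf.
- by move=> y; rewrite /= in_itv/= => xy1; rewrite lee_fin std_normal_pdf_lb.
Qed.

Lemma std_normal_cdf_lt1 (x : R) : std_normal_cdf x < 1.
Proof.
have mNy : measurable (`]-oo, x] : set R) by [].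
have : (P `]x, (x + 1)%R] <= 1 - P `]-oo, x])%E.
  rewrite -probability_setC//; apply: le_measure; rewrite ?inE//.
    exact: measurableC.
  by move=> y /=; rewrite !in_itv/= => /andP[/lt_geF ->].
move=> /(lt_le_trans (std_normal_prob_itv_gt0 x)).
by rewrite /std_normal_cdf -lte_fin fineK ?fin_num_measure// sube_gt0.
Qed.

Lemma std_normal_quantile_cvgy : std_normal_quantile a @[a --> (1 : R)^'-] --> +oo.
Proof.
exact/quantile_cvgy/cvg_std_normal_cdfy1/std_normal_cdf_lt1/std_normal_cdf_nondecreasing.
Qed.

End std_normal.

Lemma ereal_inf_image_gtNy_lbound (R : realType) (T : Type) (h : T -> R) :
  (-oo < ereal_inf [set (h t)%:E | t in [set: T]])%E -> exists L, forall t, L <= h t.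
Proof.
set S := [set _ | _ in _] => S_gtNy.
have S_lb t : (ereal_inf S <= (h t)%:E)%E by apply: ereal_inf_lbound; exists t.
move: S_gtNy S_lb; case: (ereal_inf S) => [L _ S_lb | _ S_lb | //].
- by exists L => t; rewrite -lee_fin.
- by exists 0 => t; have := S_lb t; rewrite leye_eq.
Qed.

Section penalized_minimizer.
Context {R : realType} {G : set_system R} {G_filter : Filter G} {F : Type}.
Context {mu sd : F -> R} {q : R -> R} {fhat : R -> F} {f0 : F} {L : R}.
Hypothesis q_cvgy : q @ G --> +oo.
Hypothesis fhat_min : \forall a \near G, forall f,
  mu (fhat a) + q a * sd (fhat a) <= mu f + q a * sd f.
Hypothesis sd_ge0 : forall f, 0 <= sd f.
Hypothesis sd_f0 : sd f0 = 0.
Hypothesis mu_ge : forall f, L <= mu f.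

Let fhat_le_f0 : \forall a \near G, mu (fhat a) + q a * sd (fhat a) <= mu f0.
Proof. by apply: filterS fhat_min => a /(_ f0); rewrite sd_f0 mulr0 addr0. Qed.

Let penalty_le : \forall a \near G, q a * sd (fhat a) <= mu f0 - L.
Proof. by apply: filterS fhat_le_f0 => a; have := mu_ge (fhat a); lra. Qed.

Lemma penalized_minimizer_sd_cvg0 : sd (fhat a) @[a --> G] --> 0.
Proof.
apply/cvgrPdist_le => e e_gt0.
set D := mu f0 - L; have D_ge0 : 0 <= D by rewrite subr_ge0.
pose Q := (D + 1) / e; have Q_gt0 : 0 < Q by rewrite divr_gt0// ltr_wpDl.
(* Eventually Q <= q, so that sd * Q <= q * sd <= D < e * Q. *)
near=> a.
rewrite sub0r normrN ger0_norm// -(ler_pM2r Q_gt0).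
apply: (@le_trans _ _ D); last by rewrite /Q mulrCA divff ?gt_eqF// mulr1 lerDl.
apply: (@le_trans _ _ (q a * sd (fhat a))).
  by rewrite mulrC ler_wpM2r//; near: a; exact: cvgry_ge.
by near: a; exact: penalty_le.
Unshelve. all: by end_near.
Qed.

Lemma penalized_minimizer_mu_limsup :
  (limf_esup (fun a => (mu (fhat a))%:E) G <= (mu f0)%:E)%E.
Proof.
pose V := [set a | 0 <= q a /\ mu (fhat a) + q a * sd (fhat a) <= mu f0].
have GV : G V.
  by apply: filterS2 (cvgry_ge q_cvgy 0) fhat_le_f0 => a q_ge0 le_f0; split.
apply: le_trans (ereal_inf_lbound _) _; first by exists V.
apply: ge_ereal_sup => _ [a [q_ge0 le_f0] <-]; rewrite lee_fin.
by apply: le_trans le_f0; rewrite lerDl mulr_ge0.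
Qed.

End penalized_minimizer.

Theorem propositionA4 (R : realType) (m : nat) (F : Type)
  (risk : F -> 'I_m -> R) (fhat : R -> F) (f0 : F) :
  (2 <= m)%N ->
  (* fhat a is a minimizer over F of mu_f + Phi^{-1}(a) sigma_f, for a in (0,1) *)
  (forall a : R, 0 < a < 1 -> forall f : F,
     sample_mean (risk (fhat a)) + std_normal_quantile a * sample_sd (risk (fhat a))
     <= sample_mean (risk f) + std_normal_quantile a * sample_sd (risk f)) ->
  (* 1. f0 has invariant risk *)
  sample_sd (risk f0) = 0 ->
  (* 2. mu_* = inf_f mu_f > -oo *)
  (ereal_inf [set (sample_mean (risk f))%:E | f in [set: F]] > -oo)%E ->
  ((fun a : R => sample_sd (risk (fhat a))) @ (1 : R)^'- --> (0 : R)) /\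
  (limf_esup (fun a : R => (sample_mean (risk (fhat a)))%:E) (1 : R)^'-
     <= (sample_mean (risk f0))%:E)%E.
Proof.
move=> _ fhat_min sd_f0 /ereal_inf_image_gtNy_lbound[L mu_ge].
have in01 : \forall a \near (1 : R)^'-, 0 < a < 1.
  by near=> a; apply/andP; split; near: a; [exact: nbhs_left_gt | exact: nbhs_left_lt].
have sd_ge0 f : 0 <= sample_sd (risk f) by exact: sqrtr_ge0.
have q_cvgy := std_normal_quantile_cvgy R.
split.
- exact: penalized_minimizer_sd_cvg0 q_cvgy (filterS fhat_min in01) sd_ge0 sd_f0 mu_ge.
- exact: penalized_minimizer_mu_limsup q_cvgy (filterS fhat_min in01) sd_ge0 sd_f0.
Unshelve. all: by end_near.
Qed.
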